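(* Let $f$ be an invertible $\mathbb F_q$-linearised polynomial over $\mathbb F_{q^h}$ and let $a\in\mathbb F_{q^h}$. Then the map $X\mapsto f(af^{-1}(X))$ is $\mathbb F_{q^h}$-linear (i.e. equals $X\mapsto bX$ for some $b\in\mathbb F_{q^h}$) if and only if $f$ is $\mathbb F_q(a)$-semi-linear.
   Context: An $\mathbb F_q$-linearised polynomial over $\mathbb F_{q^h}$ is $\sum_{l=0}^{h-1}a_lX^{q^l}$ with $a_l\in\mathbb F_{q^h}$, viewed as a map $\mathbb F_{q^h}\to\mathbb F_{q^h}$; invertible means bijective, and $f^{-1}$ denotes the inverse map (again a linearised polynomial). For a subfield $K$ of $\mathbb F_{q^h}$, $f$ is $K$-semi-linear if there is a field automorphism $\sigma$ of $\mathbb F_{q^h}$ with $f(\alpha x)=\alpha^\sigma f(x)$ for all $\alpha\in K$ and $x\in\mathbb F_{q^h}$. *)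

From HB Require Import structures.
From mathcomp Require Import all_boot all_order all_algebra all_field.
Set Implicit Arguments. Unset Strict Implicit. Unset Printing Implicit Defensive.
Import GRing.Theory.
Local Open Scope ring_scope.

Definition linpoly (L : finFieldType) (q h : nat) (c : 'I_h -> L) (x : L) : L :=
  \sum_(l < h) c l * x ^+ (q ^ l).

Definition in_Fq (L : finFieldType) (q : nat) (x : L) : Prop := x ^+ q = x.

Definition in_Fqa (L : finFieldType) (q : nat) (a x : L) : Prop :=
  forall S : {pred L}, GRing.divring_closed S ->
    (forall y, in_Fq q y -> y \in S) -> a \in S -> x \in S.

Definition semilinear_on (L : finFieldType) (K : L -> Prop) (f : L -> L) : Prop :=
  exists sigma : {rmorphism L -> L}, bijective sigma /\
    forall alpha x, K alpha -> f (alpha * x) = sigma alpha * f x.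

(* If f(a y) = b f(y) for all y, then f(p(a) y) = p(b) f(y) for every polynomial
   p with coefficients in F_q, because f is additive and F_q-linear.  Taking for
   p the product of the X - a^(q^j), j < h, which has coefficients in F_q since
   the q-power map permutes its roots, gives p(b) = 0, so b = a^(q^j) for some j.
   The elements u with f(u y) = u^(q^j) f(y) for all y form a subfield containing
   F_q and a, hence containing F_q(a): f is F_q(a)-semi-linear with respect to
   the automorphism x |-> x^(q^j).  The converse is immediate, with b = sigma(a). *)

From HB Require Import structures.
From mathcomp Require Import all_boot all_order all_algebra all_field all_fingroup all_solvable.
Set Implicit Arguments.
Unset Strict Implicit.

Import GRing.Theory.
Local Open Scope ring_scope.

Lemma pnat_pchar_card (L : finFieldType) : [pchar L].-nat #|L|.
Proof.
have [p _ pcharLp] := finPcharP L.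
have /abelem_pgroup := fin_ring_pchar_abelem pcharLp.
by rewrite /pgroup cardsT (eq_pnat _ (pcharf_eq pcharLp)).
Qed.

Lemma expr_expn_fixed (R : pzSemiRingType) (s : R) (q k : nat) :
  s ^+ q = s -> s ^+ (q ^ k) = s.
Proof.
move=> sq; elim: k => [|k IHk]; first by rewrite expn0 expr1.
by rewrite expnSr exprM IHk.
Qed.

Section PcharExp.
Variables (R : comNzRingType) (n : nat).

(* The proof argument keys the canonical morphism structure below. *)
Definition pchar_exp (_ : [pchar R].-nat n) (x : R) := x ^+ n.

Variable pcharRn : [pchar R].-nat n.

Lemma pchar_exp_nmod_morphism : nmod_morphism (pchar_exp pcharRn).
Proof.
split=> [|x y]; last exact: exprDn_pchar.
by rewrite /pchar_exp expr0n; case: n pcharRn.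
Qed.

Lemma pchar_exp_monoid_morphism : monoid_morphism (pchar_exp pcharRn).
Proof. by split=> [|x y]; rewrite /pchar_exp ?expr1n ?exprMn. Qed.

HB.instance Definition _ :=
  GRing.isNmodMorphism.Build R R (pchar_exp pcharRn) pchar_exp_nmod_morphism.
HB.instance Definition _ :=
  GRing.isMonoidMorphism.Build R R (pchar_exp pcharRn) pchar_exp_monoid_morphism.

End PcharExp.

Section LinearisedPolynomial.
Variables (L : finFieldType) (q h : nat) (c : 'I_h -> L).
Hypothesis pcharLq : [pchar L].-nat q.
Local Notation f := (linpoly q c).

Lemma linpolyD : {morph f : x y / x + y}.
Proof.
move=> x y; rewrite /linpoly -big_split /=; apply: eq_bigr => l _.
by rewrite exprDn_pchar ?pnatX ?pcharLq // mulrDr.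
Qed.

Lemma linpoly0 : f 0 = 0.
Proof. by apply: (@addrI _ (f 0)); rewrite -linpolyD !addr0. Qed.

Lemma linpolyB : {morph f : x y / x - y}.
Proof. by move=> x y; apply: (@addIr _ (f y)); rewrite -linpolyD !subrK. Qed.

Lemma linpoly_sum (I : Type) (r : seq I) (P : pred I) (F : I -> L) :
  f (\sum_(i <- r | P i) F i) = \sum_(i <- r | P i) f (F i).
Proof. exact: (big_morph f linpolyD linpoly0). Qed.

Lemma linpolyZ_Fq (s x : L) : in_Fq q s -> f (s * x) = s * f x.
Proof.
move=> Fq_s; rewrite /linpoly mulr_sumr; apply: eq_bigr => l _.
by rewrite exprMn mulrCA expr_expn_fixed.
Qed.

Lemma linpoly_horner_Fq (a b : L) (p : {poly L}) :
  (forall y, f (a * y) = b * f y) -> (forall i, in_Fq q p`_i) ->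
  forall y, f (p.[a] * y) = p.[b] * f y.
Proof.
move=> fa Fq_p y.
have fX i z : f (a ^+ i * z) = b ^+ i * f z.
  elim: i z => [|i IHi] z; first by rewrite !expr0 !mul1r.
  by rewrite exprSr -mulrA IHi fa mulrA -exprSr.
rewrite !horner_coef !mulr_suml linpoly_sum; apply: eq_bigr => i _.
by rewrite -mulrA linpolyZ_Fq // fX mulrA.
Qed.

End LinearisedPolynomial.

Section Conjugates.
Variables (L : finFieldType) (q h : nat).
Hypothesis cardL : #|L| = (q ^ h)%N.

Lemma card_exp_gt0 : (0 < h)%N.
Proof.
by move: (finNzRing_gt1 L); rewrite cardL; case: (h) => //; rewrite expn0.
Qed.

Lemma pnat_pchar_card_base : [pchar L].-nat q.
Proof.
apply: pnat_dvd (pnat_pchar_card L); rewrite cardL.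
by rewrite -(prednK card_exp_gt0) expnS dvdn_mulr.
Qed.

Definition conj_poly (a : L) := \prod_(j < h) ('X - (a ^+ (q ^ j))%:P).

Lemma conj_poly_Fq (a : L) i : in_Fq q (conj_poly a)`_i.
Proof.
have conj_rot : \prod_(j < h) ('X - (a ^+ (q ^ j.+1))%:P) = conj_poly a.
  rewrite /conj_poly; move: cardL card_exp_gt0; case: h => // k cardLk _.
  by rewrite big_ord_recr big_ord_recl /= mulrC -cardLk expf_card expn0 expr1.
rewrite /in_Fq -[_ ^+ q]/(pchar_exp pnat_pchar_card_base _) -coef_map.
rewrite rmorph_prod -conj_rot; congr _`_i.
by under eq_bigr => j _ do rewrite /= map_polyXsubC /= /pchar_exp -exprM -expnSr.
Qed.

Lemma root_conj_poly (a : L) : root (conj_poly a) a.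
Proof.
rewrite /root horner_prod; apply/prodf_eq0; exists (Ordinal card_exp_gt0) => //.
by rewrite !hornerE expn0 expr1 subrr.
Qed.

Lemma root_conj_polyP (a b : L) :
  root (conj_poly a) b -> exists j, b = a ^+ (q ^ j).
Proof.
rewrite /root horner_prod => /prodf_eq0[j _].
by rewrite !hornerE subr_eq0 => /eqP ->; exists j.
Qed.

End Conjugates.

Section SemilinearScalars.
Variables (L : finFieldType) (f : L -> L) (sigma : {rmorphism L -> L}).
Hypothesis fB : {morph f : x y / x - y}.

Definition semilinear_scalars : {pred L} :=
  [pred u | [forall y, f (u * y) == sigma u * f y]].

Lemma semilinear_scalarsP u :
  reflect (forall y, f (u * y) = sigma u * f y) (u \in semilinear_scalars).
Proof. by apply: (iffP forallP) => fu y; apply/eqP. Qed.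

Lemma semilinear_scalars_divring_closed : divring_closed semilinear_scalars.
Proof.
have f0 : f 0 = 0 by rewrite -[X in f X](subrr (0 : L)) fB subrr.
split.
- by apply/semilinear_scalarsP => y; rewrite rmorph1 !mul1r.
- move=> u v /semilinear_scalarsP fu /semilinear_scalarsP fv.
  by apply/semilinear_scalarsP => y; rewrite mulrBl fB fu fv rmorphB mulrBl.
move=> u v /semilinear_scalarsP fu /semilinear_scalarsP fv.
apply/semilinear_scalarsP => y.
have [->|v_neq0] := eqVneq v 0; first by rewrite invr0 mulr0 rmorph0 !mul0r f0.
have fVv : f (v^-1 * y) = sigma v^-1 * f y.
  have := fv (v^-1 * y); rewrite mulrA mulfV // mul1r => ->.
  by rewrite fmorphV mulrA mulVf ?mul1r // fmorph_eq0.
by rewrite -mulrA fu fVv rmorphM mulrA.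
Qed.

End SemilinearScalars.

Theorem lemma5p6 (L : finFieldType) (q h : nat) (c : 'I_h -> L) (a : L)
    (finv : L -> L) :
  #|L| = (q ^ h)%N ->
  cancel (linpoly q c) finv -> cancel finv (linpoly q c) ->
  (exists b : L, forall x : L, linpoly q c (a * finv x) = b * x) <->
  semilinear_on (in_Fqa q a) (linpoly q c).
Proof.
move=> cardL fK Kf; have pcharLq := pnat_pchar_card_base cardL.
split=> [[b fab] | [sigma [_ f_sigma]]]; last first.
  by exists (sigma a) => x; rewrite f_sigma ?Kf // => S.
have fa y : linpoly q c (a * y) = b * linpoly q c y by rewrite -fab fK.
have /root_conj_polyP[j bE] : root (conj_poly q h a) b.
  have := linpoly_horner_Fq pcharLq fa (conj_poly_Fq cardL a) (finv 1).
  rewrite (eqP (root_conj_poly cardL a)) mul0r linpoly0 // Kf mulr1.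
  by rewrite /root => <-.
have pcharLqj : [pchar L].-nat (q ^ j)%N by rewrite pnatX pcharLq.
pose sigma : {rmorphism L -> L} := pchar_exp pcharLqj.
exists sigma; split=> [|alpha x Fqa_alpha]; first exact: injF_bij (fmorph_inj _).
apply/(semilinear_scalarsP (linpoly q c) sigma)/Fqa_alpha => [|y Fq_y|].
- exact/semilinear_scalars_divring_closed/linpolyB.
- apply/semilinear_scalarsP => z; rewrite linpolyZ_Fq //.
  by rewrite /sigma /= /pchar_exp expr_expn_fixed.
- by apply/semilinear_scalarsP => z; rewrite fa bE.
Qed.
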